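(* Let $X,Y$ be finite abelian groups, let $Q\in M_{X\times Y}(\mathbb T)$ be generic, and put $$\theta_{ic}^{ke}=\frac{Q_{i,e-c}Q_{i-k,e}}{Q_{ie}Q_{i-k,e-c}}\qquad(i,k\in X,\ c,e\in Y).$$ For every $k\in X$ there is a group representation $\pi^k:\Gamma_{X,Y}\to U_{|Y|}$ on $\mathbb C^Y$ (standard basis $(\epsilon_e)_{e\in Y}$) given by $\pi^k(c^{(i)})\epsilon_e=\theta_{ic}^{ke}\epsilon_{e-c}$. Moreover the family $(\pi^k)_{k\in X}$ is projectively faithful: if $t\in\Gamma_{X,Y}$ is such that $\pi^k(t)$ is a scalar matrix for every $k\in X$, then $t=1$.
   Context: Finite abelian groups are written additively. $\Gamma_{X,Y}$ is the quotient of the free product $Y^{*X}$ of $|X|$ copies of $Y$ (the copy of $c\in Y$ in the $i$-th factor is $c^{(i)}$) by the relations $[c_1^{(i_1)}\cdots c_s^{(i_s)},d_1^{(j_1)}\cdots d_s^{(j_s)}]=1$ whenever $\sum_rc_r=\sum_rd_r=0$. Elements $p_1,\dots,p_m\in\mathbb T$ are root independent if $p_1^{r_1}\cdots p_m^{r_m}=1$ with $r_i\in\mathbb Z$ implies $r_1=\dots=r_m=0$. $Q$ is generic if it is dephased ($Q_{0c}=Q_{i0}=1$ for all $i\in X,c\in Y$) and the elements $Q_{ic}$ with $i\neq0,c\neq0$ are root independent. *)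

From HB Require Import structures.
From mathcomp Require Import all_boot all_order all_algebra.
From mathcomp Require Import complex reals.
Set Implicit Arguments. Unset Strict Implicit. Unset Printing Implicit Defensive.
Import Order.TTheory GRing.Theory Num.Theory.
Local Open Scope ring_scope.

Definition torus_valued (C : numDomainType) (X Y : Type) (Q : X -> Y -> C) :=
  forall i c, `|Q i c| = 1.

Definition dephased (C : nzRingType) (X Y : zmodType) (Q : X -> Y -> C) :=
  (forall c, Q 0 c = 1) /\ (forall i, Q i 0 = 1).

Definition root_independent (C : unitRingType) (I : finType) (P : pred I)
    (p : I -> C) :=
  forall r : I -> int, \prod_(j | P j) (p j) ^ (r j) = 1 -> forall j, P j -> r j = 0.

Definition generic (C : unitRingType) (X Y : finZmodType) (Q : X -> Y -> C) :=
  dephased Q /\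
  root_independent (fun ic : X * Y => (ic.1 != 0) && (ic.2 != 0))
                   (fun ic => Q ic.1 ic.2).

Definition theta (C : fieldType) (X Y : zmodType) (Q : X -> Y -> C)
    (i k : X) (c e : Y) : C :=
  Q i (e - c) * Q (i - k) e / (Q i e * Q (i - k) (e - c)).

(* Matrices on C^Y: rows/columns indexed by Y via enum_val : 'I_#|Y| -> Y.
   The standard basis vector eps_e is the column indexed by e.
   pi^k(c^(i)) eps_e = theta_{ic}^{ke} eps_{e-c}, i.e. column e has the single
   entry theta_{ic}^{ke} in row e - c. *)
Definition gen_mx (C : fieldType) (X Y : finZmodType) (Q : X -> Y -> C)
    (k i : X) (c : Y) : 'M[C]_#|Y| :=
  \matrix_(a, b) (if enum_val a == enum_val b - c
                  then theta Q i k c (enum_val b) else 0).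

(* Words in the generators c^(i) of the free product Y^{*X}: the letter (i, c)
   stands for c^(i).  (Inverses are not needed: (c^(i))^{-1} = (-c)^(i).) *)
Definition word (X Y : Type) := seq (X * Y).

Definition piw (C : fieldType) (X Y : finZmodType) (Q : X -> Y -> C) (k : X)
    (w : word X Y) : 'M[C]_#|Y| :=
  foldr (fun g M => gen_mx Q k g.1 g.2 *m M) 1%:M w.

(* Gamma_{X,Y} is the quotient of the free monoid on X x Y by the congruence
   gamma_eq generated by
   - the relations of the free product Y^{*X}: c^(i) d^(i) = (c+d)^(i), 0^(i) = 1;
   - [u, v] = 1, i.e. u v = v u, for u = c_1^(i_1)...c_s^(i_s),
     v = d_1^(j_1)...d_s^(j_s) with sum_r c_r = sum_r d_r = 0.
   (This monoid quotient is a group since c^(i) (-c)^(i) = 1.) *)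
Inductive gamma_eq (X Y : zmodType) : word X Y -> word X Y -> Prop :=
| ge_refl w : gamma_eq w w
| ge_sym u v : gamma_eq u v -> gamma_eq v u
| ge_trans u v w : gamma_eq u v -> gamma_eq v w -> gamma_eq u w
| ge_cat u u' v v' : gamma_eq u u' -> gamma_eq v v' -> gamma_eq (u ++ v) (u' ++ v')
| ge_mul (i : X) (c d : Y) : gamma_eq [:: (i, c); (i, d)] [:: (i, c + d)]
| ge_zero (i : X) : gamma_eq [:: (i, 0)] [::]
| ge_comm (u v : word X Y) :
    size u = size v ->
    \sum_(g <- u) g.2 = 0 -> \sum_(g <- v) g.2 = 0 ->
    gamma_eq (u ++ v) (v ++ u).

From Pilot Require Import Defs.
From HB Require Import structures.
From mathcomp Require Import all_boot all_order all_algebra.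
From mathcomp Require Import complex reals.
From mathcomp Require Import ring.
Set Implicit Arguments. Unset Strict Implicit. Unset Printing Implicit Defensive.
Import Order.TTheory GRing.Theory Num.Theory.
Local Open Scope ring_scope.

(* Each pi^k(c^(i)) is a monomial matrix: the translation of the basis by c times a
   diagonal matrix of thetas.  Hence pi^k(w) is monomial, translating by the Y-sum of w
   and carrying a diagonal weight computed letter by letter; both are invariant under the
   defining relations of Gamma_{X,Y} (zero-sum words act diagonally, hence commute), and
   unitarity follows from |theta| = 1.

   For faithfulness, let every pi^k(t) be scalar.  Then t has Y-sum 0, and modulo the
   relations every zero-sum word is a product of the elements a_ic = c^(i) (-c)^(0) and
   their inverses; these have zero sum, so they commute, and a_ic = 1 when i = 0 or
   c = 0.  The weight of such a product is a Laurent monomial in the Q_ic whose exponents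
   depend linearly on the net exponents r_ic of the a_ic, so by root independence the
   scalarity of the pi^k(t) becomes a linear system in r.  Comparing rows j and j + k
   shows that a certain row defect is the same for all rows j <> 0, hence vanishes, and
   this forces r_jc = 0 for all j, c <> 0: t is a product of trivial a_ic, so t = 1. *)

Lemma sum_delta_mull (R : nzRingType) (I : finType) (i0 : I) (F : I -> R) :
  \sum_i (i == i0)%:R * F i = F i0.
Proof.
by rewrite (bigD1 i0) //= eqxx mul1r big1 ?addr0 // => i /negbTE ->; rewrite mul0r.
Qed.

Lemma sum_const_except (V : zmodType) (I : finType) (i0 : I) (F : I -> V) v :
  (forall i, i != i0 -> F i = v) -> \sum_i F i = v *+ #|I| + (F i0 - v).
Proof.
move=> Fv; have -> : v *+ #|I| = \sum_(i in I) v by rewrite sumr_const.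
rewrite [LHS](bigD1 i0) //= (eq_bigr _ Fv) [in RHS](bigD1 i0) //=.
by rewrite [RHS]addrC addrA subrK.
Qed.

Lemma mulrn_card_eq0 (R : numDomainType) (I : finType) (i0 : I) (x : R) :
  x *+ #|I| = 0 -> x = 0.
Proof.
move/eqP; rewrite mulrn_eq0 => /orP [I0|/eqP //].
have : (0 < #|I|)%N by apply/card_gt0P; exists i0.
by rewrite lt0n I0.
Qed.

Lemma eq_subr_self (V : zmodType) (x y : V) : (x == x - y) = (y == 0).
Proof. by rewrite -[X in X == _]addr0 (inj_eq (addrI x)) eq_sym oppr_eq0. Qed.

Lemma expfz_sum (C : fieldType) (x : C) (I : Type) (r : seq I) (P : pred I) F :
  x != 0 -> x ^ (\sum_(i <- r | P i) F i) = \prod_(i <- r | P i) x ^ F i.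
Proof.
move=> x0; apply: (big_rec2 (fun n y => x ^ n = y)) => [|i n y _ <-].
  exact: expr0z.
exact: expfzDr.
Qed.

Section MonomialMatrix.
Variables (C : nzRingType) (Y : finZmodType).

Definition monomial_mx (w : Y -> C) (c : Y) : 'M[C]_#|Y| :=
  \matrix_(a, b) (if enum_val a == enum_val b - c then w (enum_val b) else 0).

Lemma sum_shift (F : 'I_#|Y| -> C) (a : 'I_#|Y|) (c : Y) :
  \sum_b (if enum_val a == enum_val b - c then F b else 0) =
  F (enum_rank (enum_val a + c)).
Proof.
rewrite (bigD1 (enum_rank (enum_val a + c))) //= enum_rankK addrK eqxx.
rewrite big1 ?addr0 // => b; apply: contraNeq => /eqP; case: eqP => // ->.
by rewrite subrK enum_valK.
Qed.

Lemma mul_monomial_mx w1 c1 w2 c2 :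
  monomial_mx w1 c1 *m monomial_mx w2 c2 =
  monomial_mx (fun e => w1 (e - c2) * w2 e) (c1 + c2).
Proof.
apply/matrixP => a b; rewrite !mxE.
under eq_bigr do rewrite !mxE (fun_if (fun x => x * _)) mul0r.
rewrite sum_shift enum_rankK [c1 + c2]addrC opprD addrA.
rewrite -[enum_val a == _]subr_eq opprK.
by case: eqP => [->|]; rewrite ?mulr0.
Qed.

Lemma monomial_mx1 : monomial_mx (fun _ => 1) 0 = 1%:M.
Proof.
by apply/matrixP => a b; rewrite !mxE subr0 (inj_eq enum_val_inj); case: eqP.
Qed.

Lemma eq_monomial_mx w1 w2 c : w1 =1 w2 -> monomial_mx w1 c = monomial_mx w2 c.
Proof. by move=> w12; apply/matrixP => a b; rewrite !mxE w12. Qed.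

Lemma scalar_monomial_mx w c : (forall e, w e != 0) ->
  is_scalar_mx (monomial_mx w c) -> c = 0 /\ forall e, w e = w 0.
Proof.
move=> w_neq0 /is_scalar_mxP [x wcE].
have diagE e : monomial_mx w c (enum_rank (e - c)) (enum_rank e) = w e.
  by rewrite mxE !enum_rankK eqxx.
have c0 : c = 0.
  apply/eqP; apply: contraR (w_neq0 0) => c_neq0.
  by rewrite -diagE wcE mxE (inj_eq enum_rank_inj) sub0r oppr_eq0 (negbTE c_neq0).
split=> // e; subst c.
by rewrite -diagE -[w 0]diagE wcE !mxE !subr0 !eqxx.
Qed.
End MonomialMatrix.

Lemma monomial_mx_unitary (C : numClosedFieldType) (Y : finZmodType) (w : Y -> C) c :
  (forall e, `|w e| = 1) -> monomial_mx w c \is unitarymx.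
Proof.
move=> w_norm1; apply/unitarymxP/matrixP => a b; rewrite !mxE.
under eq_bigr do rewrite !mxE (fun_if (fun x => x * _)) mul0r.
rewrite sum_shift enum_rankK addrK (inj_eq enum_val_inj) eq_sym.
by case: eqP => [->|_]; rewrite ?conjC0 ?mulr0 // -normCK w_norm1 expr1n.
Qed.

Section Words.
Variables (X Y : zmodType).
Implicit Types (u v w : word X Y) (i : X) (c : Y) (g : X * Y).

Definition wsum w : Y := \sum_(g <- w) g.2.

Lemma wsum_nil : wsum [::] = 0.
Proof. exact: big_nil. Qed.

Lemma wsum_cons g w : wsum (g :: w) = g.2 + wsum w.
Proof. exact: big_cons. Qed.

Lemma wsum_cat u v : wsum (u ++ v) = wsum u + wsum v.
Proof. exact: big_cat. Qed.

Lemma gamma_eq_catl u v v' : gamma_eq v v' -> gamma_eq (u ++ v) (u ++ v').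
Proof. by move=> vE; apply: ge_cat (Defs.ge_refl u) vE. Qed.

Lemma gamma_eq_catr u u' v : gamma_eq u u' -> gamma_eq (u ++ v) (u' ++ v).
Proof. by move=> uE; apply: ge_cat uE (Defs.ge_refl v). Qed.

Lemma gamma_eq_dropl u v : gamma_eq u [::] -> gamma_eq (u ++ v) v.
Proof. exact: gamma_eq_catr. Qed.

Lemma gamma_eq_dropr u v : gamma_eq v [::] -> gamma_eq (u ++ v) u.
Proof. by rewrite -{2}(cats0 u); apply: gamma_eq_catl. Qed.

Lemma gamma_eq_inv i c : gamma_eq [:: (i, c); (i, - c)] [::].
Proof. by apply: (Defs.ge_trans (ge_mul _ _ _)); rewrite subrr; apply: ge_zero. Qed.

Lemma gamma_eq_zeros n : gamma_eq (nseq n (0 : X, 0 : Y)) [::].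
Proof.
elim: n => [|n IHn]; first exact: Defs.ge_refl.
exact: (Defs.ge_trans (gamma_eq_dropr [:: (0, 0)] IHn) (@ge_zero X Y 0)).
Qed.

(* Padding with the trivial letter 0^(0) equalizes the lengths, as [ge_comm] requires. *)
Lemma gamma_eq_commute u v :
  wsum u = 0 -> wsum v = 0 -> gamma_eq (u ++ v) (v ++ u).
Proof.
move=> u0 v0; pose pad w n := w ++ nseq n (0 : X, 0 : Y).
have wsum_pad w n : wsum (pad w n) = wsum w.
  by rewrite wsum_cat addrC; elim: n => [|n IHn]; rewrite ?wsum_nil ?wsum_cons ?add0r.
have padE w n : gamma_eq (pad w n) w by apply/gamma_eq_dropr/gamma_eq_zeros.
apply: (Defs.ge_trans (ge_cat (ge_sym (padE u (size v))) (ge_sym (padE v (size u))))).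
apply: (Defs.ge_trans _ (ge_cat (padE v (size u)) (padE u (size v)))).
apply: ge_comm; first by rewrite !size_cat !size_nseq addnC.
all: by rewrite -[LHS]/(wsum _) wsum_pad.
Qed.

(* [basic_word (true, (i, c))] is a_ic = c^(i) (-c)^(0), and
   [basic_word (false, (i, c))] = c^(0) (-c)^(i) is its inverse. *)
Definition basic_word (a : bool * (X * Y)) : word X Y :=
  let: (b, (i, c)) := a in
  if b then [:: (i, c); (0, - c)] else [:: (0, c); (i, - c)].

Definition basic_words (L : seq (bool * (X * Y))) : word X Y :=
  flatten (map basic_word L).

Lemma basic_words_cons a L : basic_words (a :: L) = basic_word a ++ basic_words L.
Proof. by []. Qed.

Lemma basic_words_cat L1 L2 : basic_words (L1 ++ L2) = basic_words L1 ++ basic_words L2.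
Proof. by rewrite /basic_words map_cat flatten_cat. Qed.

Lemma wsum_basic_word a : wsum (basic_word a) = 0.
Proof. by case: a => [[] [i c]]; rewrite !wsum_cons wsum_nil addr0 ?subrr ?addNr. Qed.

Lemma wsum_basic_words L : wsum (basic_words L) = 0.
Proof.
elim: L => [|a L IHL]; first exact: wsum_nil.
by rewrite basic_words_cons wsum_cat wsum_basic_word IHL addr0.
Qed.

Lemma basic_wordV b g : gamma_eq (basic_word (b, g) ++ basic_word (~~ b, g)) [::].
Proof.
have cancel i j c : gamma_eq [:: (i, c); (j, - c); (j, c); (i, - c)] [::].
  apply: (Defs.ge_trans _ (gamma_eq_inv i c)).
  rewrite -[[:: _; _; _; _]]/([:: (i, c)] ++ [:: (j, - c); (j, c)] ++ [:: (i, - c)]).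
  by apply/gamma_eq_catl/gamma_eq_dropl; rewrite -{2}(opprK c); apply: gamma_eq_inv.
by case: g b => i c []; apply: cancel.
Qed.

Lemma basic_word_trivial b g :
  (g.1 == 0) || (g.2 == 0) -> gamma_eq (basic_word (b, g)) [::].
Proof.
case: g => i c /= /orP [/eqP -> | /eqP ->]; first by case: b; apply: gamma_eq_inv.
have zeros (j j' : X) : gamma_eq [:: (j, 0 : Y); (j', 0)] [::].
  exact: (Defs.ge_trans (gamma_eq_dropl [:: (j', 0)] (ge_zero Y j)) (ge_zero Y j')).
by case: b; rewrite /= oppr0; apply: zeros.
Qed.

Lemma basic_words_cancel b g L1 L2 :
  gamma_eq (basic_word (b, g) ++ basic_words (L1 ++ (~~ b, g) :: L2))
           (basic_words (L1 ++ L2)).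
Proof.
rewrite !basic_words_cat basic_words_cons [basic_words L1 ++ _]catA.
have comm := gamma_eq_commute (wsum_basic_words L1) (wsum_basic_word (~~ b, g)).
apply: (Defs.ge_trans (gamma_eq_catl _ (gamma_eq_catr _ comm))).
by rewrite -!catA catA; apply/gamma_eq_dropl/basic_wordV.
Qed.

Lemma word_normal_form w : exists L, gamma_eq w (basic_words L ++ [:: (0, wsum w)]).
Proof.
elim/last_ind: w => [|w [i c] [L wE]].
  by exists [::]; rewrite wsum_nil; apply/ge_sym/ge_zero.
exists (L ++ [:: (false, (i, wsum w)); (true, (i, wsum w + c))]).
rewrite -cats1 wsum_cat wsum_cons wsum_nil addr0 basic_words_cat -!catA.
apply: (Defs.ge_trans (gamma_eq_catr _ wE)); rewrite -catA; apply: gamma_eq_catl.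
set s := wsum w.
(* s^(0) c^(i) = [s^(0) (-s)^(i)] [(s+c)^(i) (-(s+c))^(0)] (s+c)^(0) *)
change (gamma_eq ([:: (0, s)] ++ [:: (i, c)] ++ [::])
  ([:: (0, s)] ++ [:: (i, - s); (i, s + c)] ++ [:: (0, - (s + c)); (0, s + c)])).
apply/gamma_eq_catl/ge_cat.
  by have := ge_mul i (- s) (s + c); rewrite addKr => /ge_sym.
by apply: ge_sym; have := gamma_eq_inv 0 (- (s + c)); rewrite opprK.
Qed.

Definition sign (b : bool) : int := if b then 1 else -1.

Definition net_exponent (L : seq (bool * (X * Y))) g : int :=
  \sum_(a <- L | a.2 == g) sign a.1.

Lemma net_exponent_cons a L g :
  net_exponent (a :: L) g = (a.2 == g)%:R * sign a.1 + net_exponent L g.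
Proof. by rewrite /net_exponent big_cons; case: eqP; rewrite ?mul1r ?mul0r ?add0r. Qed.

Lemma net_exponent_cat L1 L2 g :
  net_exponent (L1 ++ L2) g = net_exponent L1 g + net_exponent L2 g.
Proof. exact: big_cat. Qed.

Lemma sign_net_exponent_ge0 b g L :
  (~~ b, g) \notin L -> 0 <= sign b * net_exponent L g.
Proof.
elim: L => [|[b' g'] L IHL]; first by rewrite /net_exponent big_nil mulr0.
rewrite in_cons negb_or net_exponent_cons mulrDr /= => /andP [neq /IHL].
apply: addr_ge0 => //; case: (g' =P g) neq => [-> | _]; rewrite ?mul0r ?mulr0 //.
by case: b' {IHL}; case: b; rewrite ?eqxx.
Qed.

Lemma net_exponent_mem b g L : net_exponent ((b, g) :: L) g = 0 -> (~~ b, g) \in L.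
Proof.
rewrite net_exponent_cons eqxx mul1r => /eqP; apply: contraTT => /sign_net_exponent_ge0.
rewrite addrC addr_eq0; case: b => /= le0; apply/eqP => nE; by move: le0; rewrite nE.
Qed.

Lemma basic_words_trivial L :
  (forall g, g.1 != 0 -> g.2 != 0 -> net_exponent L g = 0) ->
  gamma_eq (basic_words L) [::].
Proof.
elim: {L}(size L).+1 {-2}L (ltnSn (size L)) => // n IHn [|[b g] L] sizeL L0.
  exact: Defs.ge_refl.
have [g_triv|] := boolP ((g.1 == 0) || (g.2 == 0)).
  apply: (Defs.ge_trans (gamma_eq_dropl _ (basic_word_trivial b g_triv))).
  apply: IHn => // h h1 h2; rewrite -(L0 h h1 h2) net_exponent_cons.
  case: eqP => [/= gh|_]; last by rewrite mul0r add0r.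
  by rewrite gh (negbTE h1) (negbTE h2) in g_triv.
rewrite negb_or => /andP [g1 g2].
have L_mem := net_exponent_mem (L0 g g1 g2).
move: sizeL L0; case/splitPr: L_mem => L1 L2 sizeL L0.
apply: (Defs.ge_trans (basic_words_cancel b g L1 L2)); apply: IHn.
  by move: sizeL; rewrite /= !size_cat /= addnS ltnS; apply: ltnW.
move=> h h1 h2; rewrite -(L0 h h1 h2) net_exponent_cons !net_exponent_cat net_exponent_cons.
by case: b {sizeL L0} => /=; ring.
Qed.
End Words.

Section Weights.
Variables (C : fieldType) (X Y : zmodType) (Q : X -> Y -> C).
Hypothesis Q_neq0 : forall i c, Q i c != 0.

Lemma theta_neq0 i k c e : theta Q i k c e != 0.
Proof. by rewrite /theta !mulf_neq0 ?invr_neq0 ?mulf_neq0. Qed.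

Lemma theta0 i k e : theta Q i k 0 e = 1.
Proof. by rewrite /theta subr0 divff // mulf_neq0. Qed.

Lemma thetaD i k c d e :
  theta Q i k c (e - d) * theta Q i k d e = theta Q i k (c + d) e.
Proof.
rewrite /theta -addrA -opprD [d + c]addrC.
by field; rewrite !Q_neq0.
Qed.

Fixpoint weight k (w : word X Y) : Y -> C :=
  if w is g :: w' then fun e => theta Q g.1 k g.2 (e - wsum w') * weight k w' e
  else fun _ => 1.

Lemma weight_neq0 k w e : weight k w e != 0.
Proof. by elim: w => [|g w IHw] /=; rewrite ?oner_neq0 // mulf_neq0 ?theta_neq0. Qed.

Lemma weight_cat k u v e : weight k (u ++ v) e = weight k u (e - wsum v) * weight k v e.
Proof.
elim: u => [|g u IHu] /=; first by rewrite mul1r.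
by rewrite IHu wsum_cat mulrA opprD addrA [e - _ - _]addrAC.
Qed.

Lemma gamma_eq_weight k u v :
  gamma_eq u v -> wsum u = wsum v /\ weight k u =1 weight k v.
Proof.
elim=> {u v} [w | u v _ [-> uv] | u v w _ [-> uv] _ [-> vw]
             | u u' v v' _ [su wu] _ [sv wv] | i c d | i | u v _ u0 v0] //.
- by split=> // e; rewrite uv.
- by split=> // e; rewrite uv vw.
- by rewrite !wsum_cat su sv; split=> // e; rewrite !weight_cat wu wv sv.
- rewrite !wsum_cons wsum_nil !addr0; split=> // e /=.
  by rewrite !wsum_cons !wsum_nil !addr0 !subr0 !mulr1 thetaD.
- by rewrite wsum_cons wsum_nil addr0; split=> // e /=; rewrite wsum_nil theta0 mulr1.
- have {}u0 : wsum u = 0 by []; have {}v0 : wsum v = 0 by [].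
  rewrite !wsum_cat u0 v0.
  by split=> // e; rewrite !weight_cat u0 v0 subr0 mulrC.
Qed.
End Weights.

Definition dirac (T : eqType) (x y : T) : int := (y == x)%:R.

Section BasicExponents.
Variables (X Y : finZmodType).

(* For dephased Q, the exponents of the weight of a_g at column e under pi^k. *)
Definition basic_exponent (k : X) (e : Y) (g : X * Y) : X * Y -> int := fun y =>
  dirac (- k, e) y - dirac (- k, e + g.2) y + dirac (g.1, e) y - dirac (g.1, e + g.2) y
  + dirac (g.1 - k, e + g.2) y - dirac (g.1 - k, e) y.

Lemma basic_exponent_diff k i j e c f : f != 0 ->
  basic_exponent k e (i, c) (j, f) - basic_exponent k 0 (i, c) (j, f) =
  ((j == - k)%:R + (j == i)%:R - (j == i - k)%:R) *
  ((f == e)%:R - (f == e + c)%:R + (f == c)%:R).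
Proof.
move=> f0; rewrite /basic_exponent /dirac !xpair_eqE /= !add0r (negbTE f0).
by case: (j == - k); case: (f == e); case: (f == e + c); case: (j == i);
  case: (j == i - k); case: (f == c).
Qed.
End BasicExponents.


Section LaurentMonomials.
Variables (C : fieldType) (X Y : finType) (Q : X -> Y -> C).
Hypothesis Q_neq0 : forall i c, Q i c != 0.

Definition Qmon (z : X * Y -> int) : C := \prod_x Q x.1 x.2 ^ z x.

Lemma Qmon_neq0 z : Qmon z != 0.
Proof. by apply/prodf_neq0 => x _; rewrite expfz_neq0. Qed.

Lemma Qmon_dirac x : Qmon (dirac x) = Q x.1 x.2.
Proof.
rewrite /Qmon (bigD1 x) //= /dirac eqxx expr1z big1 ?mulr1 // => y /negbTE ->.
exact: expr0z.
Qed.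

Lemma QmonD z1 z2 : Qmon (fun x => z1 x + z2 x) = Qmon z1 * Qmon z2.
Proof. by rewrite /Qmon -big_split; apply: eq_bigr => x _; rewrite expfzDr. Qed.

Lemma QmonN z : Qmon (fun x => - z x) = (Qmon z)^-1.
Proof. by rewrite /Qmon -prodfV; apply: eq_bigr => x _; rewrite invr_expz. Qed.

Lemma QmonXz z n : Qmon z ^ n = Qmon (fun x => n * z x).
Proof.
apply: (big_rec2 (fun y a => y ^ n = a)) => [|x y a _ <-]; first exact: exp1rz.
by rewrite expfzMl exprz_exp [z x * n]mulrC.
Qed.

Lemma Qmon_sum (I : finType) (z : I -> X * Y -> int) :
  \prod_i Qmon (z i) = Qmon (fun x => \sum_i z i x).
Proof. by rewrite exchange_big; apply: eq_bigr => x _; rewrite expfz_sum. Qed.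
End LaurentMonomials.

Lemma Qmon_eq1 (C : fieldType) (X Y : finZmodType) (Q : X -> Y -> C) z :
  generic Q -> Qmon Q z = 1 -> forall x, x.1 != 0 -> x.2 != 0 -> z x = 0.
Proof.
case=> [[Q0c Qi0] Qri] Qz x x1 x2; apply: Qri; last by rewrite x1 x2.
rewrite -[RHS]Qz [RHS](bigID (fun x : X * Y => (x.1 != 0) && (x.2 != 0))) /=.
rewrite [X in _ = _ * X]big1 ?mulr1 // => -[i c] /nandP [] /negPn /eqP ->.
  by rewrite Q0c exp1rz.
by rewrite Qi0 exp1rz.
Qed.

Section BasicWordWeights.
Variables (C : fieldType) (X Y : finZmodType) (Q : X -> Y -> C).
Hypotheses (Q_neq0 : forall i c, Q i c != 0) (Q_dephased : dephased Q).

Lemma weight_basic_word k e g :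
  weight Q k (basic_word (true, g)) e = Qmon Q (basic_exponent k e g).
Proof.
case: g => i c; rewrite /basic_exponent !QmonD // !QmonN // !Qmon_dirac /=.
rewrite !wsum_cons !wsum_nil !addr0 subr0 mulr1 /theta.
case: Q_dephased => Q0c _; rewrite !Q0c sub0r opprK addrK !mul1r.
by field; rewrite !Q_neq0.
Qed.

Lemma weight_basic_wordV k e g :
  weight Q k (basic_word (false, g)) e = (weight Q k (basic_word (true, g)) e)^-1.
Proof.
have [_ /(_ e)] := gamma_eq_weight Q_neq0 k (basic_wordV false g).
rewrite weight_cat wsum_basic_word subr0 /= => /(canRL (mulfK (weight_neq0 Q_neq0 _ _ _))).
by rewrite mul1r.
Qed.

Lemma weight_basic_words k e L : weight Q k (basic_words L) e =
  Qmon Q (fun x => \sum_g net_exponent L g * basic_exponent k e g x).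
Proof.
rewrite -Qmon_sum //; under eq_bigr do rewrite -QmonXz //.
elim: L => [|[b g] L IHL].
  by rewrite big1 // => g _; rewrite /net_exponent big_nil expr0z.
rewrite basic_words_cons weight_cat wsum_basic_words subr0 IHL.
under [RHS]eq_bigr do rewrite net_exponent_cons expfzDr ?Qmon_neq0 //.
rewrite big_split /=; congr (_ * _).
rewrite (bigD1 g) //= eqxx mul1r big1 ?mulr1; last first.
  by move=> h /negbTE; rewrite eq_sym => ->; rewrite mul0r expr0z.
by case: b; rewrite /sign ?expr1z ?exprN1 ?weight_basic_wordV weight_basic_word.
Qed.
End BasicWordWeights.





Section ExponentEquations.
Variables (X Y : finZmodType) (r : X * Y -> int).

Definition defect (j : X) (e f : Y) : int :=
  \sum_c ((f == e)%:R - (f == e + c)%:R + (f == c)%:R) * r (j, c).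

Lemma defectE j e f :
  defect j e f = (f == e)%:R * \sum_c r (j, c) - r (j, f - e) + r (j, f).
Proof.
rewrite /defect; under eq_bigr do rewrite mulrDl mulrBl.
have r_pick c0 : r (j, c0) = \sum_c (c == c0)%:R * r (j, c) by rewrite sum_delta_mull.
rewrite big_split sumrB /= -big_distrr [r (j, f - e)]r_pick [r (j, f)]r_pick.
congr (_ - _ + _); apply: eq_bigr => c _; congr (_%:R * _).
  by rewrite eq_sym addrC (can2_eq (addrK e) (subrK e)).
by rewrite eq_sym.
Qed.

Lemma sum_basic_exponent_diff k e j f : f != 0 ->
  \sum_g r g * (basic_exponent k e g (j, f) - basic_exponent k 0 g (j, f)) =
  (j == - k)%:R * \sum_i defect i e f + defect j e f - defect (j + k) e f.
Proof.
move=> f0; transitivity (\sum_i \sum_c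
    r (i, c) * (basic_exponent k e (i, c) (j, f) - basic_exponent k 0 (i, c) (j, f))).
  by rewrite pair_big; apply: eq_bigr => -[i c].
under eq_bigr do under eq_bigr do rewrite basic_exponent_diff // mulrC -mulrA.
under eq_bigr do rewrite -big_distrr /= mulrBl mulrDl.
rewrite sumrB big_split -big_distrr /=; congr (_ + _ - _).
  by under eq_bigr do rewrite eq_sym; exact: (sum_delta_mull j (fun i => defect i e f)).
under eq_bigr do rewrite eq_sym subr_eq.
exact: (sum_delta_mull (j + k) (fun i => defect i e f)).
Qed.

Hypothesis r_eq : forall k e j f, j != 0 -> f != 0 ->
  \sum_g r g * (basic_exponent k e g (j, f) - basic_exponent k 0 g (j, f)) = 0.

Lemma defect_eq k e j f : j != 0 -> f != 0 ->
  (j == - k)%:R * \sum_i defect i e f + defect j e f = defect (j + k) e f.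
Proof. by move=> j0 f0; apply/eqP; rewrite -subr_eq0 -sum_basic_exponent_diff ?r_eq. Qed.

Lemma defect_const e f j j' : j != 0 -> j' != 0 -> f != 0 -> defect j e f = defect j' e f.
Proof.
move=> j0 j'0 f0; rewrite -[j' in RHS](addrNK j) addrC -defect_eq // opprB.
by rewrite eq_subr_self (negbTE j'0) mul0r add0r.
Qed.

Lemma defect_eq0 e f j : j != 0 -> f != 0 -> defect j e f = 0.
Proof.
move=> j0 f0; have := defect_eq (- j) e j0 f0; rewrite opprK eqxx mul1r subrr.
rewrite (sum_const_except (i0 := 0) (v := defect j e f)) => [dE|i i0].
  by apply: (mulrn_card_eq0 0); rewrite -[RHS](subrr (defect 0 e f)) -{1}dE; ring.
exact: defect_const.
Qed.

Lemma exponent_row_const j c g : j != 0 -> c != 0 -> g != 0 -> r (j, g) = r (j, c).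
Proof.
move=> j0 c0 g0; have := defect_eq0 (c - g) j0 c0; rewrite defectE.
rewrite eq_subr_self (negbTE g0) mul0r sub0r.
by rewrite opprB [c + _]addrC subrK addrC => /eqP; rewrite subr_eq0 => /eqP.
Qed.

Lemma exponent_eq0 j c : j != 0 -> c != 0 -> r (j, c) = 0.
Proof.
move=> j0 c0; have := defect_eq0 c j0 c0; rewrite defectE eqxx mul1r subrr.
rewrite (sum_const_except (i0 := 0) (v := r (j, c))) => [rE|g g0].
  by apply: (mulrn_card_eq0 0); rewrite -[RHS]rE; ring.
exact: exponent_row_const.
Qed.
End ExponentEquations.

Section Representation.
Variables (C : fieldType) (X Y : finZmodType) (Q : X -> Y -> C).
Hypothesis Q_neq0 : forall i c, Q i c != 0.

Lemma piw_monomial k w : piw Q k w = monomial_mx (weight Q k w) (wsum w).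
Proof.
elim: w => [|g w IHw] /=; first by rewrite wsum_nil monomial_mx1.
by rewrite IHw wsum_cons mul_monomial_mx.
Qed.

Lemma piw_gamma_eq k u v : gamma_eq u v -> piw Q k u = piw Q k v.
Proof.
move=> uv; have [uv_sum uv_weight] := gamma_eq_weight Q_neq0 k uv.
by rewrite !piw_monomial uv_sum (eq_monomial_mx _ uv_weight).
Qed.

Hypothesis Q_generic : generic Q.

Lemma basic_words_exponent_eq L k :
  (forall e, weight Q k (basic_words L) e = weight Q k (basic_words L) 0) ->
  forall e j f, j != 0 -> f != 0 ->
  \sum_g net_exponent L g * (basic_exponent k e g (j, f) - basic_exponent k 0 g (j, f)) = 0.
Proof.
move=> L_const e j f j0 f0; have [Q_dephased _] := Q_generic.
pose z x := \sum_g net_exponent L g * basic_exponent k e g x -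
            \sum_g net_exponent L g * basic_exponent k 0 g x.
have Qz : Qmon Q z = 1.
  rewrite QmonD // QmonN // -!weight_basic_words // L_const divff //.
  exact: weight_neq0.
rewrite -[RHS](Qmon_eq1 Q_generic Qz (x := (j, f)) j0 f0) /z -sumrB.
by apply: eq_bigr => g _; rewrite mulrBr.
Qed.

Lemma piw_projectively_faithful t :
  (forall k, is_scalar_mx (piw Q k t)) -> gamma_eq t [::].
Proof.
move=> t_scalar.
have t_const k : wsum t = 0 /\ forall e, weight Q k t e = weight Q k t 0.
  by apply: scalar_monomial_mx; [exact: weight_neq0 | rewrite -piw_monomial].
have [L tL] := word_normal_form t; rewrite (t_const 0).1 in tL.
have {}tL := Defs.ge_trans tL (gamma_eq_dropr _ (ge_zero Y 0)).
apply: (Defs.ge_trans tL); apply: basic_words_trivial => -[j c] j0 c0.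
apply: (exponent_eq0 (r := net_exponent L)) => // k e j' f j'0 f0.
apply: basic_words_exponent_eq => // e'; have [_ tLw] := gamma_eq_weight Q_neq0 k tL.
by rewrite -!tLw; apply: (t_const k).2.
Qed.
End Representation.

Lemma gen_mx_unitary (C : numClosedFieldType) (X Y : finZmodType) (Q : X -> Y -> C) k i c :
  torus_valued Q -> gen_mx Q k i c \is unitarymx.
Proof.
move=> Q_torus; apply: monomial_mx_unitary => e.
by rewrite /theta normrM normfV !normrM !Q_torus !mul1r invr1.
Qed.

Theorem lemma4p4 (R : realType) (X Y : finZmodType) (Q : X -> Y -> R[i]) :
  torus_valued Q -> generic Q ->
  (forall (k i : X) (c : Y), gen_mx Q k i c \is unitarymx) /\
  (forall (k : X) (u v : word X Y), gamma_eq u v -> piw Q k u = piw Q k v) /\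
  (forall t : word X Y, (forall k : X, is_scalar_mx (piw Q k t)) -> gamma_eq t [::]).
Proof.
move=> Q_torus Q_generic.
have Q_neq0 i c : Q i c != 0 by rewrite -normr_eq0 Q_torus oner_neq0.
split; first by move=> k i c; apply: gen_mx_unitary.
by split=> [k u v|t]; [apply: piw_gamma_eq | apply: piw_projectively_faithful].
Qed.
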